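(* Let $R_n\in\mathbb{Z}[x,y,z]$ be the Markov–Pell polynomials. Then for all $k\ge2$, $$R_{2k+1}=(x^2+y^2)(x^2+y^2+z^2)\,R_{2k-1}-x^2y^2z^4\,R_{2k-3},$$ and for all $k\ge0$, $R_{2k+1}(x,y,z)=P_{k/(k+1)}(x^2,y^2,z^2)$ (with $P_{0/1}:=1$).
   Context: Markov polynomials. Let $x,y,z$ be indeterminates. Consider the set consisting of all rationals $\rho\in[0,1]$, each written in lowest terms $\rho=a/b$ with integers $a\ge 0$, $b\ge 1$, together with the formal symbol $1/0$. Define Laurent polynomials $M_\rho(x,y,z)$ recursively by $M_{1/0}=y$, $M_{0/1}=x$, $M_{1/1}=\frac{x^2+y^2}{z}$, and: whenever $a/b$, $c/d$ are in this set with $|ad-bc|=1$ and $(a+2c)/(b+2d)\in[0,1]$, then $M_{\frac{a+2c}{b+2d}}=\big(M_{c/d}^2+M_{\frac{a+c}{b+d}}^2\big)/M_{a/b}$. This determines $M_\rho$ for every rational $\rho\in[0,1]$. Numerator. For coprime $1\le a\le b$, $P_{a/b}(u,v,w)$ denotes the homogeneous polynomial of degree $a+b-1$ such that $M_{a/b}(x,y,z)=P_{a/b}(x^2,y^2,z^2)/(x^{a-1}y^{b-1}z^{a+b-1})$; its existence is known. Markov–Pell polynomials: $R_0=0$, $R_1=1$, and for $k\ge1$: $R_{2k}=(x^2+y^2)R_{2k-1}+y^2z^2R_{2k-2}$, $R_{2k+1}=(x^2+y^2)R_{2k}+x^2z^2R_{2k-1}$. *)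

From HB Require Import structures.
From mathcomp Require Import all_boot all_order all_algebra.
From mathcomp Require Import fraction.
From mathcomp Require Import mpoly.
Set Implicit Arguments. Unset Strict Implicit. Unset Printing Implicit Defensive.
Import Order.TTheory GRing.Theory Num.Theory.
Local Open Scope ring_scope.

Definition Zxyz := {mpoly int[3]}.
Definition vx : Zxyz := 'X_(@Ordinal 3 0 isT).
Definition vy : Zxyz := 'X_(@Ordinal 3 1 isT).
Definition vz : Zxyz := 'X_(@Ordinal 3 2 isT).

Definition Fxyz := {fraction Zxyz}.
Definition fx : Fxyz := tofrac vx.
Definition fy : Fxyz := tofrac vy.
Definition fz : Fxyz := tofrac vz.

(* Markov-Pell polynomials: RR n = (R_n, R_{n+1}), with
   R_m = (x^2+y^2) R_{m-1} + c_m R_{m-2} for m >= 2,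
   c_m = y^2 z^2 if m even, x^2 z^2 if m odd. *)
Fixpoint RR (n : nat) : Zxyz * Zxyz :=
  match n with
  | 0 => (0, 1)
  | n'.+1 =>
      let (a, b) := RR n' in
      (b, (vx ^+ 2 + vy ^+ 2) * b
          + (if odd n'.+2 then vx ^+ 2 * vz ^+ 2 else vy ^+ 2 * vz ^+ 2) * a)
  end.
Definition MarkovPell (n : nat) : Zxyz := (RR n).1.

(* Markov polynomials M_{a/b}, via descent in the Stern-Brocot (Farey) tree.
   A node is a pair of Farey neighbours p = pa/pb, q = qa/qb with mediant
   m = (pa+qa)/(pb+qb); Mp Mm Mq are the attached values.
   Moving to the child (m,q), the new mediant (p+2q) gets value (Mq^2+Mm^2)/Mp;
   moving to the child (p,m), the new mediant (2p+q) gets value (Mp^2+Mm^2)/Mq;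
   both are instances of the defining recursion. *)
Fixpoint mdesc (fuel : nat) (a b pa pb qa qb : nat) (Mp Mm Mq : Fxyz) : Fxyz :=
  match fuel with
  | 0 => Mm
  | f.+1 =>
      let ma := (pa + qa)%N in let mb := (pb + qb)%N in
      if (a * mb == ma * b)%N then Mm
      else if (a * mb < ma * b)%N
           then mdesc f a b pa pb ma mb Mp ((Mp ^+ 2 + Mm ^+ 2) / Mq) Mm
           else mdesc f a b ma mb qa qb Mm ((Mq ^+ 2 + Mm ^+ 2) / Mp) Mq
  end.

(* M_{a/b} for a/b in lowest terms (a <= b, or a/b = 1/0).
   Root node: p = 0/1 (M = x), q = 1/0 (M = y), mediant 1/1 (M = (x^2+y^2)/z). *)
Definition Markov (a b : nat) : Fxyz :=
  if (a == 1%N) && (b == 0%N) then fy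
  else if (a == 0%N) && (b == 1%N) then fx
  else mdesc (a + b) a b 0 1 1 0 fx ((fx ^+ 2 + fy ^+ 2) / fz) fy.

(* P is "the" numerator of M_{a/b}: homogeneous of degree a+b-1 with
   M_{a/b}(x,y,z) = P(x^2,y^2,z^2) / (x^(a-1) y^(b-1) z^(a+b-1)). *)
Definition sqsubst (P : Zxyz) : Zxyz :=
  P \mPo [tuple vx ^+ 2; vy ^+ 2; vz ^+ 2].

Definition IsMarkovNumerator (a b : nat) (P : Zxyz) : Prop :=
  P \is (a + b - 1)%N.-homog /\
  Markov a b * (fx ^+ (a - 1) * fy ^+ (b - 1) * fz ^+ (a + b - 1))
    = tofrac (sqsubst P).

(* The odd Markov-Pell polynomials u_j = R_{2j+1} obey a two-term recursion
   u_{j+2} = A u_{j+1} - B u_j, hence a Cassini identity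
   u_{j+2} u_j - u_{j+1}^2 = B^j C.  With T = x y z^2 one has B = T^2 and
   C = (M_{1/1} T / x)^2, so the Cassini identity says exactly that the
   values x u_j / T^j satisfy the exchange relation
   M_{(j+2)/(j+3)} = (M_{1/1}^2 + M_{(j+1)/(j+2)}^2) / M_{j/(j+1)}
   that defines M along the Stern-Brocot path of Farey pairs (j/(j+1), 1/1).
   Hence M_{k/(k+1)} = x R_{2k+1} / T^k, which is the numerator formula. *)
From HB Require Import structures.
From mathcomp Require Import all_boot all_order all_algebra.
From mathcomp Require Import fraction mpoly.
From mathcomp Require Import ring zify.
Import Order.TTheory GRing.Theory Num.Theory.
Local Open Scope ring_scope.

Section Cassini.

Context {R : comPzRingType} {A B : R} {w : nat -> R}.
Hypothesis w_rec : forall j, w j.+2 = A * w j.+1 - B * w j.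

Lemma cassini_rec j : w j.+2 * w j - w j.+1 ^+ 2 = B ^+ j * (w 2 * w 0 - w 1 ^+ 2).
Proof.
elim: j => [|j IH]; first by rewrite mul1r.
by rewrite (w_rec j.+1) (exprS B) -mulrA -IH (w_rec j); ring.
Qed.

End Cassini.

Section Exchange.

Context {F : fieldType} {x c d T : F} {U : nat -> F}.
Hypotheses (x_neq0 : x != 0) (T_neq0 : T != 0) (U_neq0 : forall j, U j != 0).
Hypothesis cT : c * T = x * d.
Hypothesis U_cassini : forall j, U j.+2 * U j - U j.+1 ^+ 2 = (d * T ^+ j) ^+ 2.

Lemma exchange_cassini j :
  x * U j.+2 / T ^+ j.+2
  = (c ^+ 2 + (x * U j.+1 / T ^+ j.+1) ^+ 2) / (x * U j / T ^+ j).
Proof.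
have eU2 : U j.+2 = ((d * T ^+ j) ^+ 2 + U j.+1 ^+ 2) / U j.
  by rewrite -U_cassini subrK mulfK.
have ec : c = x * d / T by rewrite -cT mulfK.
rewrite eU2 ec !exprS; field.
by rewrite expf_neq0 // x_neq0 T_neq0 U_neq0.
Qed.

End Exchange.

Section OddMarkovPellValues.

Context {F : fieldType} {x y z : F} {U : nat -> F}.
Hypotheses (x_neq0 : x != 0) (y_neq0 : y != 0) (z_neq0 : z != 0).
Hypothesis U_neq0 : forall j, U j != 0.
Hypothesis U1 : U 1%N = (x ^+ 2 + y ^+ 2) ^+ 2 + x ^+ 2 * z ^+ 2.
Hypothesis U_cassini : forall j, U j.+2 * U j - U j.+1 ^+ 2 =
  (x ^+ 2 * y ^+ 2 * z ^+ 4) ^+ j * (y ^+ 2 * z ^+ 2 * (x ^+ 2 + y ^+ 2) ^+ 2).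

Local Notation T := (x * y * z ^+ 2).
Local Notation c := ((x ^+ 2 + y ^+ 2) / z).

Lemma odd_MarkovPell_value1 : x * U 1%N / T ^+ 1 = (x ^+ 2 + c ^+ 2) / y.
Proof. by rewrite U1 expr1; field; rewrite x_neq0 y_neq0 z_neq0. Qed.

Lemma odd_MarkovPell_exchange j :
  x * U j.+2 / T ^+ j.+2 = (c ^+ 2 + (x * U j.+1 / T ^+ j.+1) ^+ 2) / (x * U j / T ^+ j).
Proof.
apply: (@exchange_cassini _ _ _ ((x ^+ 2 + y ^+ 2) * y * z)) => //.
- by rewrite !mulf_neq0 // expf_neq0.
- by field.
- move=> i; rewrite U_cassini (_ : x ^+ 2 * y ^+ 2 * z ^+ 4 = T ^+ 2); last by ring.
  by rewrite exprAC; ring.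
Qed.

End OddMarkovPellValues.

(* Along the path of Farey pairs (j/(j+1), 1/1) the descent towards k/(k+1)
   always moves to the child (mediant, 1/1). *)
Lemma mdesc_staircase (M : nat -> Fxyz) (c : Fxyz) :
  (forall j, M j.+2 = (c ^+ 2 + M j.+1 ^+ 2) / M j) ->
  forall f k j, (j < k)%N -> (k - j <= f)%N ->
  mdesc f k k.+1 j j.+1 1 1 (M j) (M j.+1) c = M k.
Proof.
move=> M_rec; elim=> [|f IH] k j ltjk lef; first lia.
rewrite /= !addn1.
have [->|nek] := eqVneq k j.+1; first by rewrite eqxx.
rewrite ifF; last by apply/eqP; lia.
rewrite ifF; last by apply/negbTE; rewrite -leqNgt; lia.
by rewrite -M_rec; apply: IH; lia.
Qed.

Lemma Markov_staircase (M : nat -> Fxyz) k :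
  let c := (fx ^+ 2 + fy ^+ 2) / fz in
  M 0%N = fx -> M 1%N = (fx ^+ 2 + c ^+ 2) / fy ->
  (forall j, M j.+2 = (c ^+ 2 + M j.+1 ^+ 2) / M j) ->
  Markov k k.+1 = M k.
Proof.
move=> c M0 M1 M_rec; rewrite /Markov andbF /=.
have [-> /=|k0] := eqVneq k 0%N; first by rewrite M0.
rewrite addnS [mdesc _ _ _ _ _ _ _ _ _ _]/= !muln1 !add0n !mul1n addn0 ltnSn.
rewrite ifF; last by apply/eqP; lia.
have := @mdesc_staircase M c M_rec (k + k) k 0; rewrite M0 M1; apply; lia.
Qed.

Lemma MarkovPellSS n :
  MarkovPell n.+2 = (vx ^+ 2 + vy ^+ 2) * MarkovPell n.+1
    + (if odd n then vx ^+ 2 * vz ^+ 2 else vy ^+ 2 * vz ^+ 2) * MarkovPell n.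
Proof. by rewrite /MarkovPell /=; case: (RR n) => a b /=; rewrite negbK. Qed.

Lemma MarkovPell0 : MarkovPell 0 = 0. Proof. by []. Qed.
Lemma MarkovPell1 : MarkovPell 1 = 1. Proof. by []. Qed.

Definition MarkovPell_odd (j : nat) : Zxyz := MarkovPell j.*2.+1.

Lemma MarkovPell_odd1 :
  MarkovPell_odd 1 = (vx ^+ 2 + vy ^+ 2) ^+ 2 + vx ^+ 2 * vz ^+ 2.
Proof.
by rewrite /MarkovPell_odd (MarkovPellSS 1) (MarkovPellSS 0) MarkovPell1 MarkovPell0 /=; ring.
Qed.

Lemma MarkovPell_oddSS j :
  MarkovPell_odd j.+2 =
    (vx ^+ 2 + vy ^+ 2) * (vx ^+ 2 + vy ^+ 2 + vz ^+ 2) * MarkovPell_odd j.+1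
    - vx ^+ 2 * vy ^+ 2 * vz ^+ 4 * MarkovPell_odd j.
Proof.
rewrite /MarkovPell_odd !doubleS.
rewrite (MarkovPellSS j.*2.+3) (MarkovPellSS j.*2.+2) (MarkovPellSS j.*2.+1) /=.
by rewrite odd_double /=; ring.
Qed.

Lemma MarkovPell_odd_cassini j :
  MarkovPell_odd j.+2 * MarkovPell_odd j - MarkovPell_odd j.+1 ^+ 2 =
    (vx ^+ 2 * vy ^+ 2 * vz ^+ 4) ^+ j
    * (vy ^+ 2 * vz ^+ 2 * (vx ^+ 2 + vy ^+ 2) ^+ 2).
Proof.
rewrite (cassini_rec MarkovPell_oddSS) (MarkovPell_oddSS 0) MarkovPell_odd1.
by rewrite /MarkovPell_odd MarkovPell1; congr (_ * _); ring.
Qed.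

(* At x = y = z = 1 the Markov-Pell polynomials become the Pell numbers. *)
Lemma MarkovPell_eval1 n :
  0 <= (MarkovPell n).@[fun _ => 1] /\ 1 <= (MarkovPell n.+1).@[fun _ => 1].
Proof.
elim: n => [|n [ge0 ge1]]; first by rewrite meval1 meval0.
have ge0' := le_trans ler01 ge1; split=> //.
have ev1 i : (('X_i : Zxyz) ^+ 2).@[fun _ => 1] = 1 by rewrite rmorphXn /= mevalXU expr1n.
rewrite MarkovPellSS mevalD !mevalM mevalD !ev1.
rewrite (_ : (if odd n then _ else _).@[_] = 1); last by case: ifP; rewrite mevalM !ev1.
by rewrite mul1r mulrDl mul1r -addrA (le_trans ge1) ?lerDl ?addr_ge0.
Qed.

Lemma MarkovPell_neq0 n : MarkovPell n.+1 != 0.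
Proof.
apply/eqP => R0; have := (MarkovPell_eval1 n).2.
by rewrite R0 meval0.
Qed.

Lemma fxyz_neq0 : [/\ fx != 0, fy != 0 & fz != 0].
Proof.
have X_neq0 i : tofrac ('X_i : Zxyz) != 0.
  rewrite tofrac_eq0; apply/eqP => X0.
  by have := mevalXU (fun _ => 1 : int) i; rewrite X0 meval0.
by split; apply: X_neq0.
Qed.

Lemma Markov_k_kS k :
  Markov k k.+1 * (fx * fy * fz ^+ 2) ^+ k = fx * tofrac (MarkovPell_odd k).
Proof.
have [x0 y0 z0] := fxyz_neq0.
pose U j := tofrac (MarkovPell_odd j).
have U_neq0 j : U j != 0 by rewrite tofrac_eq0 MarkovPell_neq0.
have U1 : U 1%N = (fx ^+ 2 + fy ^+ 2) ^+ 2 + fx ^+ 2 * fz ^+ 2.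
  by rewrite /U MarkovPell_odd1 !(rmorphXn, rmorphD, rmorphM).
have U_cassini j : U j.+2 * U j - U j.+1 ^+ 2 = (fx ^+ 2 * fy ^+ 2 * fz ^+ 4) ^+ j
    * (fy ^+ 2 * fz ^+ 2 * (fx ^+ 2 + fy ^+ 2) ^+ 2).
  move: (congr1 (@tofrac _) (MarkovPell_odd_cassini j)).
  by rewrite !(rmorphB, rmorphXn, rmorphD, rmorphM) /= -/fx -/fy -/fz.
have T0 : (fx * fy * fz ^+ 2) ^+ k != 0 :=
  expf_neq0 k (mulf_neq0 (mulf_neq0 x0 y0) (expf_neq0 2 z0)).
rewrite (@Markov_staircase (fun j => fx * U j / (fx * fy * fz ^+ 2) ^+ j)) ?(divfK T0).
- by [].
- by rewrite /U /MarkovPell_odd MarkovPell1 rmorph1 expr0 divr1 mulr1.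
- exact: (odd_MarkovPell_value1 x0 y0 z0 U1).
- exact: (odd_MarkovPell_exchange x0 y0 z0 U_neq0 U_cassini).
Qed.

Theorem mainTheorem8 :
  (forall k : nat, (2 <= k)%N ->
     MarkovPell (2 * k + 1) =
       (vx ^+ 2 + vy ^+ 2) * (vx ^+ 2 + vy ^+ 2 + vz ^+ 2) * MarkovPell (2 * k - 1)
       - vx ^+ 2 * vy ^+ 2 * vz ^+ 4 * MarkovPell (2 * k - 3))
  /\ MarkovPell 1 = 1
  /\ (forall (k : nat) (P : Zxyz), (1 <= k)%N -> IsMarkovNumerator k k.+1 P ->
        MarkovPell (2 * k + 1) = sqsubst P).
Proof.
split.
  case=> [|[|j]] // _.
  have -> : (2 * j.+2 + 1 = j.+2.*2.+1)%N by lia.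
  have -> : (2 * j.+2 - 1 = j.+1.*2.+1)%N by lia.
  have -> : (2 * j.+2 - 3 = j.*2.+1)%N by lia.
  exact: MarkovPell_oddSS.
split; first exact: MarkovPell1.
case=> [|k] P // _ [_].
rewrite !subn1 addnS !succnK => hP.
have [x0 _ _] := fxyz_neq0.
have := Markov_k_kS k.+1.
have -> : (fx * fy * fz ^+ 2) ^+ k.+1 = fx * (fx ^+ k * fy ^+ k.+1 * fz ^+ (k.+1 + k.+1)).
  by rewrite !exprMn exprD exprS; ring.
rewrite [Markov _ _ * _]mulrCA hP => /(mulfI x0)/eqP; rewrite tofrac_eq => /eqP ->.
by rewrite /MarkovPell_odd -mul2n addn1.
Qed.
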